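(* Let $m$ be an odd positive integer and $q\geq 1$. Then $m\#Q_q$ divides $Q_{m+q}$.
   Context: $Q_q$ denotes the $q$-dimensional hypercube graph (vertices are $q$-tuples of $0$'s and $1$'s, adjacent iff they differ in exactly one coordinate). For a graph $G$ and $m\geq 1$, $m\#G$ is the graph obtained by taking two disjoint copies $G'$ and $G''$ of $G$ and joining each vertex $v'\in V(G')$ to the corresponding vertex $v''\in V(G'')$ by a path with $m$ edges, these new paths being internally vertex-disjoint from each other and from $G'\cup G''$. For graphs $H$ and $G$, ''$H$ divides $G$'' means there is a collection of subgraphs $H_i$ of $G$, each isomorphic to $H$, such that $E(G)$ is the disjoint union of the edge sets $E(H_i)$. *)

From mathcomp Require Import all_boot.
Set Implicit Arguments. Unset Strict Implicit. Unset Printing Implicit Defensive.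

(* A (simple) graph is given by a finite vertex type V and a symmetric,
   irreflexive adjacency relation adj : rel V. *)

Definition edges (V : finType) (adj : rel V) : {set {set V}} :=
  [set [set p.1; p.2] | p : V * V & adj p.1 p.2].

Definition image_edges (U V : finType) (adjH : rel U) (f : U -> V)
  : {set {set V}} :=
  [set [set f p.1; f p.2] | p : U * U & adjH p.1 p.2].

(* A subgraph isomorphic to H is given by an
   injective map f : V(H) -> V(G) sending edges to edges; the copy H_i is the
   subgraph with vertex set f(V(H)) and edge set image_edges adjH f. *)
Definition divides (U : finType) (adjH : rel U) (V : finType) (adjG : rel V)
  : Prop :=
  exists (k : nat) (f : 'I_k -> U -> V),
    [/\ forall i, injective (f i),
        forall i x y, adjH x y -> adjG (f i x) (f i y),
        forall i j, i != j -> [disjoint image_edges adjH (f i)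
                                 & image_edges adjH (f j)]
      & \bigcup_(i < k) image_edges adjH (f i) = edges adjG].

Definition hcube_vertex (q : nat) := {ffun 'I_q -> bool}.
Definition hcube_adj (q : nat) : rel (hcube_vertex q) :=
  fun x y => #|[set i | x i != y i]| == 1.

(* Vertices: (b, v) is the copy v' (b = false) or v'' (b = true) of v;
   (v, i), i < m-1, is the i-th internal vertex of the path joining v' to v''.
   Along the path of v the positions are: v' at 0, (v,i) at i+1, v'' at m. *)
Definition sharp_vertex (m : nat) (V : finType) : finType :=
  ((bool * V) + (V * 'I_(m.-1)))%type.

Definition sharp_base (m : nat) (V : finType) (w : sharp_vertex m V) : V :=
  match w with inl (_, v) => v | inr (v, _) => v end.

Definition sharp_pos (m : nat) (V : finType) (w : sharp_vertex m V) : nat :=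
  match w with
  | inl (false, _) => 0
  | inl (true, _) => m
  | inr (_, i) => (nat_of_ord i).+1
  end.

Definition sharp_adj (m : nat) (V : finType) (adj : rel V)
  : rel (sharp_vertex m V) :=
  fun w1 w2 =>
    match w1, w2 with
    | inl (b1, v1), inl (b2, v2) => (b1 == b2) && adj v1 v2
    | _, _ => false
    end
    || ((sharp_base w1 == sharp_base w2) &&
        ((sharp_pos w1 == (sharp_pos w2).+1) ||
         (sharp_pos w2 == (sharp_pos w1).+1))).

Arguments sharp_adj m {V} adj.
Arguments hcube_adj q : clear implicits.

From mathcomp Require Import all_boot zify.
Set Implicit Arguments. Unset Strict Implicit. Unset Printing Implicit Defensive.

(* Index the copies by the vertices x of Q_m of even weight.  Writing
   Q_(m+q) = Q_m x Q_q, the copy of index x sends the vertex at position j of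
   the path through v to (x with its first j coordinates flipped, v): the
   paths follow the monotone path from x to its complement, and the two copies
   of Q_q lie over x and over its complement, which has odd weight as m is odd.
   Conversely, an edge inside the fibre over y lies in the copy of y or of the
   complement of y, whichever is even, and an edge flipping coordinate c over y
   is the c-th step of the copy obtained from y by flipping its first c or
   c + 1 coordinates, whichever is even.  A parity argument shows these are the
   only copies containing the edge. *)

Lemma set2_eq (T : finType) (a b c d : T) :
  [set a; b] = [set c; d] -> (a = c /\ b = d) \/ (a = d /\ b = c).
Proof.
move=> abcd.
have /set2P a_cd : a \in [set c; d] by rewrite -abcd set21.
have /set2P b_cd : b \in [set c; d] by rewrite -abcd set22.
have /set2P c_ab : c \in [set a; b] by rewrite abcd set21.
have /set2P d_ab : d \in [set a; b] by rewrite abcd set22.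
by case: a_cd b_cd c_ab d_ab => -> [] -> [] ? [] ?; subst; tauto.
Qed.

Definition hamming n (x y : hcube_vertex n) : nat := #|[set i | x i != y i]|.

Lemma hcube_adjE n (x y : hcube_vertex n) : hcube_adj n x y = (hamming x y == 1).
Proof. by []. Qed.

Lemma hamming_sym n (x y : hcube_vertex n) : hamming x y = hamming y x.
Proof. by apply: eq_card => i; rewrite !inE eq_sym. Qed.

Lemma hamming_eq0 n (x y : hcube_vertex n) : (hamming x y == 0) = (x == y).
Proof.
rewrite cards_eq0; apply/eqP/eqP => [xy|->]; last by apply/setP => i; rewrite !inE eqxx.
apply/ffunP => i; apply/eqP/negPn/negP => nxy.
by have := in_set0 i; rewrite -xy inE nxy.
Qed.

Lemma hcube_adj_sym n : symmetric (hcube_adj n).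
Proof. by move=> x y; rewrite !hcube_adjE hamming_sym. Qed.

Lemma hcube_adj_irr n (x : hcube_vertex n) : hcube_adj n x x = false.
Proof. by rewrite hcube_adjE; have /eqP -> : hamming x x == 0 by rewrite hamming_eq0. Qed.

Section Concatenation.
Variables n1 n2 : nat.
Implicit Types (y : hcube_vertex n1) (v : hcube_vertex n2).

Definition hcat y v : hcube_vertex (n1 + n2) :=
  [ffun k => match split k with inl i => y i | inr j => v j end].

Lemma hcat_lshift y v i : hcat y v (lshift n2 i) = y i.
Proof. by rewrite ffunE (unsplitK (inl _ i)). Qed.

Lemma hcat_rshift y v j : hcat y v (rshift n1 j) = v j.
Proof. by rewrite ffunE (unsplitK (inr _ j)). Qed.

Lemma hcat_inj y v y' v' : hcat y v = hcat y' v' -> y = y' /\ v = v'.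
Proof.
by move=> yv; split; apply/ffunP => i;
  [rewrite -(hcat_lshift y v) yv hcat_lshift | rewrite -(hcat_rshift y v) yv hcat_rshift].
Qed.

Lemma hcat_surj (a : hcube_vertex (n1 + n2)) : exists y v, a = hcat y v.
Proof.
exists [ffun i => a (lshift n2 i)], [ffun j => a (rshift n1 j)].
apply/ffunP => k; rewrite ffunE -[in LHS](splitK k).
by case: (split k) => i /=; rewrite ffunE.
Qed.

Lemma hamming_hcat y v y' v' :
  hamming (hcat y v) (hcat y' v') = hamming y y' + hamming v v'.
Proof.
rewrite /hamming -!sum1_card big_mkcond big_split_ord /=.
by congr (_ + _); rewrite [RHS]big_mkcond; apply: eq_bigr => i _;
  rewrite !inE ?hcat_lshift ?hcat_rshift.
Qed.

Lemma hcube_adj_hcat y v y' v' :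
  hcube_adj (n1 + n2) (hcat y v) (hcat y' v') =
  (y == y') && hcube_adj n2 v v' || hcube_adj n1 y y' && (v == v').
Proof. by rewrite !hcube_adjE hamming_hcat -!hamming_eq0; lia. Qed.

End Concatenation.

Lemma big_addb_ltn n j : \big[addb/false]_(i < n) (i < j) = odd (minn j n).
Proof.
elim: n => [|n IH]; first by rewrite big_ord0 minn0.
rewrite big_ord_recr /= IH; case: (leqP j n) => jn.
  by rewrite (minn_idPl (leqW jn)) addbF.
by rewrite (minn_idPr jn) addbT.
Qed.

Lemma unit_step_start_eq a1 a2 b1 b2 :
  (a1 = a2.+1 \/ a2 = a1.+1) -> (b1 = b2.+1 \/ b2 = b1.+1) ->
  minn a1 a2 = minn b1 b2 -> odd a1 = odd b1 -> a1 = b1.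
Proof.
move=> a12 b12 min_ab.
have [->|[->|->]] : a1 = b1 \/ a1 = b1.+1 \/ b1 = a1.+1 by lia.
- by [].
- by move=> /=; case: (odd b1).
- by move=> /=; case: (odd a1).
Qed.

Section PrefixFlip.
Variable n : nat.
Implicit Types x y : hcube_vertex n.

Definition flip_prefix x (j : nat) : hcube_vertex n := [ffun i => x i (+) (i < j)].

Definition parity x : bool := \big[addb/false]_i x i.

Lemma flip_prefixK j : involutive (flip_prefix^~ j).
Proof. by move=> x; apply/ffunP => i; rewrite !ffunE -addbA addbb addbF. Qed.

Lemma flip_prefixC x j k :
  flip_prefix (flip_prefix x j) k = flip_prefix (flip_prefix x k) j.
Proof. by apply/ffunP => i; rewrite !ffunE -!addbA (addbC (i < j)). Qed.

Lemma flip_prefix_neq x j k (i : 'I_n) :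
  (flip_prefix x j i != flip_prefix x k i) = (minn j k <= i < maxn j k).
Proof.
rewrite !ffunE (inj_eq (@addbI (x i))); move: (nat_of_ord i) => {}i.
by case: leqP => jk; case: (ltnP i j) => ij; case: (ltnP i k) => ik //=; lia.
Qed.

Lemma flip_prefix_inj x j k :
  j <= n -> k <= n -> flip_prefix x j = flip_prefix x k -> j = k.
Proof.
move=> jn kn xjk; apply/eqP/negPn/negP => jk.
have min_lt : minn j k < n by lia.
by have := flip_prefix_neq x j k (Ordinal min_lt); rewrite xjk eqxx /=; lia.
Qed.

Lemma hamming_flip_prefixS x c :
  c < n -> hamming (flip_prefix x c) (flip_prefix x c.+1) = 1.
Proof.
move=> cn; apply/eqP/cards1P; exists (Ordinal cn); apply/setP => i.
by rewrite !inE flip_prefix_neq -val_eqE /=; lia.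
Qed.

Lemma hcube_adj_flip_prefix x y :
  hcube_adj n x y -> exists2 c, c < n & y = flip_prefix (flip_prefix x c) c.+1.
Proof.
rewrite hcube_adjE => /cards1P[c xy]; exists c => //.
apply/ffunP => i; move/setP/(_ i): xy.
rewrite !inE !ffunE -val_eqE /= ltnS.
by case: (ltngtP i c); case: (x i); case: (y i).
Qed.

Lemma parity_flip_prefix x j : j <= n -> parity (flip_prefix x j) = parity x (+) odd j.
Proof.
move=> jn; rewrite /parity (eq_bigr (fun i => x i (+) (i < j))) => [|i _].
  by rewrite big_split /= big_addb_ltn (minn_idPl jn).
by rewrite ffunE.
Qed.

End PrefixFlip.

Section SharpGraph.
Variables (m : nat) (V : finType) (adj : rel V).
Implicit Types w : sharp_vertex m V.

Lemma sharp_pos_le w : sharp_pos w <= m.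
Proof. by case: w => [[[] v]|[v i]] //=; have := ltn_ord i; lia. Qed.

Lemma sharp_vertex_eq w1 w2 : 0 < m ->
  sharp_pos w1 = sharp_pos w2 -> sharp_base w1 = sharp_base w2 -> w1 = w2.
Proof.
move=> m_gt0.
case: w1 => [[b1 v1]|[v1 i1]]; case: w2 => [[b2 v2]|[v2 i2]] /=.
- by case: b1; case: b2 => //= h ->; try lia.
- by have := ltn_ord i2; case: b1 => /=; lia.
- by have := ltn_ord i1; case: b2 => /=; lia.
- by move=> [/val_inj ->] ->.
Qed.

Lemma sharp_vertex_at (j : nat) (v : V) : j <= m ->
  exists2 w : sharp_vertex m V, sharp_pos w = j & sharp_base w = v.
Proof.
move=> jm; case: (posnP j) => [->|j_gt0]; first by exists (inl (false, v)).
case: (eqVneq j m) => [->|jnm]; first by exists (inl (true, v)).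
have jm' : j.-1 < m.-1 by lia.
by exists (inr (v, Ordinal jm')) => //=; lia.
Qed.

Lemma sharp_adj_sym : symmetric adj -> symmetric (sharp_adj m adj).
Proof.
move=> adj_sym w1 w2; rewrite /sharp_adj; congr (_ || _); last by rewrite eq_sym orbC.
by case: w1 => [[b1 v1]|] //; case: w2 => [[b2 v2]|] //; rewrite eq_sym adj_sym.
Qed.

Lemma sharp_adj_cases w1 w2 : sharp_adj m adj w1 w2 ->
  [/\ adj (sharp_base w1) (sharp_base w2), sharp_pos w1 = sharp_pos w2
    & sharp_pos w1 = 0 \/ sharp_pos w1 = m] \/
  sharp_base w1 = sharp_base w2 /\
    (sharp_pos w1 = (sharp_pos w2).+1 \/ sharp_pos w2 = (sharp_pos w1).+1).
Proof.
move=> /orP[adj12 | /andP[/eqP eq_base consec]]; last first.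
  by right; split => //; case/orP: consec => /eqP; [left|right].
left; case: w1 adj12 => [[b1 v1]|//]; case: w2 => [[b2 v2]|//] /= /andP[/eqP <- adj12].
by split => //; case: b1; [right|left].
Qed.

Lemma sharp_adj_consecutive j k (v : V) : j <= m -> k <= m ->
  (j = k.+1 \/ k = j.+1) ->
  exists w1 w2 : sharp_vertex m V,
    [/\ sharp_adj m adj w1 w2, sharp_pos w1 = j, sharp_pos w2 = k,
        sharp_base w1 = v & sharp_base w2 = v].
Proof.
move=> jm km jk; have [w1 pos1 base1] := sharp_vertex_at v jm.
have [w2 pos2 base2] := sharp_vertex_at v km.
exists w1, w2; split => //; apply/orP; right.
by rewrite base1 base2 pos1 pos2 eqxx /=; case: jk => ->; rewrite eqxx ?orbT.
Qed.

End SharpGraph.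

Section HypercubeCopies.
Variables m q : nat.
Notation W := (sharp_vertex m (hcube_vertex q)).
Notation sharp_cube_adj := (sharp_adj m (hcube_adj q)).
Implicit Types (x y : hcube_vertex m) (w : W).

Definition sharp_embed x w : hcube_vertex (m + q) :=
  hcat (flip_prefix x (sharp_pos w)) (sharp_base w).

Lemma sharp_embed_inj x : 0 < m -> injective (sharp_embed x).
Proof.
move=> m_gt0 w1 w2 /hcat_inj[/flip_prefix_inj eq_pos eq_base].
by apply: sharp_vertex_eq => //; apply: eq_pos; apply: sharp_pos_le.
Qed.

Lemma sharp_embed_adj x w1 w2 :
  sharp_cube_adj w1 w2 -> hcube_adj (m + q) (sharp_embed x w1) (sharp_embed x w2).
Proof.
rewrite /sharp_embed hcube_adj_hcat.
case/sharp_adj_cases => [[adj12 -> _]|[-> consec]]; first by rewrite eqxx adj12.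
apply/orP; right; rewrite eqxx andbT hcube_adjE.
have := sharp_pos_le w1; have := sharp_pos_le w2.
by case: consec => -> *; [rewrite hamming_sym|]; rewrite hamming_flip_prefixS.
Qed.

Hypothesis m_odd : odd m.

Lemma sharp_embed_shared_edge x x' w1 w2 u1 u2 :
  parity x = false -> parity x' = false ->
  sharp_cube_adj w1 w2 -> sharp_cube_adj u1 u2 ->
  sharp_embed x w1 = sharp_embed x' u1 -> sharp_embed x w2 = sharp_embed x' u2 ->
  x = x'.
Proof.
move=> even_x even_x' adj_w adj_u /hcat_inj[flip1 base1] /hcat_inj[flip2 base2].
suff pos1 : sharp_pos w1 = sharp_pos u1.
  by rewrite -[x](flip_prefixK (sharp_pos w1)) flip1 pos1 flip_prefixK.
have odd_pos : odd (sharp_pos w1) = odd (sharp_pos u1).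
  have := congr1 (@parity m) flip1.
  by rewrite !parity_flip_prefix ?sharp_pos_le // even_x even_x'.
case: (sharp_adj_cases adj_w) => [[adj_base _ end_w]|[eq_base_w consec_w]];
  case: (sharp_adj_cases adj_u) => [[adj_base' _ end_u]|[eq_base_u consec_u]].
- by case: end_w end_u odd_pos => -> [] -> //=; rewrite m_odd.
- by move: adj_base; rewrite base1 base2 eq_base_u hcube_adj_irr.
- by move: adj_base'; rewrite -base1 -base2 eq_base_w hcube_adj_irr.
have same_gap (i : 'I_m) :
    (minn (sharp_pos w1) (sharp_pos w2) <= i < maxn (sharp_pos w1) (sharp_pos w2)) =
    (minn (sharp_pos u1) (sharp_pos u2) <= i < maxn (sharp_pos u1) (sharp_pos u2)).
  by rewrite -(flip_prefix_neq x) -(flip_prefix_neq x') flip1 flip2.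
(* Both steps flip the single coordinate [minn] of their endpoints. *)
have min_eq : minn (sharp_pos w1) (sharp_pos w2) = minn (sharp_pos u1) (sharp_pos u2).
  have := sharp_pos_le w1; have := sharp_pos_le w2.
  have := sharp_pos_le u1; have := sharp_pos_le u2.
  move: same_gap consec_w consec_u.
  move: (sharp_pos w1) (sharp_pos w2) (sharp_pos u1) (sharp_pos u2) => a1 a2 b1 b2 same_gap *.
  have lt_a : minn a1 a2 < m by lia.
  have lt_b : minn b1 b2 < m by lia.
  by have := same_gap (Ordinal lt_a); have := same_gap (Ordinal lt_b); rewrite /=; lia.
exact: unit_step_start_eq consec_w consec_u min_eq odd_pos.
Qed.

Lemma sharp_copies_disjoint x x' :
  parity x = false -> parity x' = false -> x != x' ->
  [disjoint image_edges sharp_cube_adj (sharp_embed x)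
          & image_edges sharp_cube_adj (sharp_embed x')].
Proof.
move=> even_x even_x' /eqP neq_x; rewrite disjoint_subset.
apply/subsetP => _ /imsetP[[w1 w2] adj_w ->]; apply/negP => /imsetP[[u1 u2] adj_u].
rewrite !inE /= in adj_w adj_u.
case/set2_eq => [[e1 e2]|[e1 e2]]; apply: neq_x.
  exact: sharp_embed_shared_edge e1 e2.
apply: sharp_embed_shared_edge e1 e2 => //.
by rewrite (sharp_adj_sym (@hcube_adj_sym q)).
Qed.

Lemma hcube_edge_in_sharp_copy a b : hcube_adj (m + q) a b ->
  exists2 x, parity x = false & [set a; b] \in image_edges sharp_cube_adj (sharp_embed x).
Proof.
have copy_edge y w1 w2 : sharp_cube_adj w1 w2 -> parity y = odd (sharp_pos w1) ->
    exists2 x, parity x = false &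
      [set hcat y (sharp_base w1);
           hcat (flip_prefix (flip_prefix y (sharp_pos w1)) (sharp_pos w2)) (sharp_base w2)]
      \in image_edges sharp_cube_adj (sharp_embed x).
  move=> adj_w par_y; exists (flip_prefix y (sharp_pos w1)).
    by rewrite parity_flip_prefix ?sharp_pos_le // par_y addbb.
  by apply/imsetP; exists (w1, w2); rewrite ?inE // /sharp_embed flip_prefixK.
have [y [v ->]] := hcat_surj a; have [y' [v' ->]] := hcat_surj b.
rewrite hcube_adj_hcat => /orP[/andP[/eqP <- adj_v] | /andP[adj_y /eqP <-]].
  have := copy_edge y (inl (parity y, v)) (inl (parity y, v')).
  rewrite /= flip_prefixK; apply; first by rewrite /sharp_adj /= eqxx adj_v.
  by case: (parity y); rewrite /= ?m_odd.
have [c lt_c ->] := hcube_adj_flip_prefix adj_y.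
have [par_y|par_y] := eqVneq (parity y) (odd c).
  have [w1 [w2 [adj_w pos1 pos2 base1 base2]]] :=
    sharp_adj_consecutive (hcube_adj q) v (ltnW lt_c) lt_c (or_intror erefl).
  by have := copy_edge y w1 w2 adj_w; rewrite pos1 pos2 base1 base2; apply.
have [w1 [w2 [adj_w pos1 pos2 base1 base2]]] :=
  sharp_adj_consecutive (hcube_adj q) v lt_c (ltnW lt_c) (or_introl erefl).
have := copy_edge y w1 w2 adj_w; rewrite pos1 pos2 base1 base2 flip_prefixC; apply.
by move: par_y; rewrite /=; case: (parity y); case: (odd c).
Qed.

End HypercubeCopies.

Theorem lemma6 (m q : nat) :
  odd m -> 0 < m -> 1 <= q ->
  divides (sharp_adj m (hcube_adj q)) (hcube_adj (m + q)).
Proof.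
(* The construction does not need [1 <= q]: for q = 0 it tiles Q_m by paths. *)
move=> m_odd m_gt0 _.
pose S := [set x : hcube_vertex m | ~~ parity x].
have even_val (i : 'I_#|S|) : parity (enum_val i) = false.
  by have := enum_valP i; rewrite inE => /negbTE.
exists #|S|, (fun i => sharp_embed (enum_val i)); split.
- by move=> i; apply: sharp_embed_inj.
- by move=> i; apply: sharp_embed_adj.
- by move=> i j ij; apply: sharp_copies_disjoint; rewrite ?(inj_eq enum_val_inj).
apply/setP => e; apply/bigcupP/imsetP => [[i _ /imsetP[[w1 w2] adj_w ->]]|[[a b] adj_ab ->]].
  exists (sharp_embed (enum_val i) w1, sharp_embed (enum_val i) w2) => //.
  by rewrite !inE /= in adj_w *; apply: sharp_embed_adj.
rewrite inE /= in adj_ab.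
have [x even_x edge_x] := hcube_edge_in_sharp_copy m_odd adj_ab.
have xS : x \in S by rewrite inE even_x.
by exists (enum_rank_in xS x); rewrite ?enum_rankK_in.
Qed.
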